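(* Let $\nu>0$, $\tau>0$, $A>0$, $N\ge2$, and let $h^n$ ($n\ge0$) be generated by the MBE scheme $h^0=\Pi_Nh_0$, $\frac{h^{n+1}-h^n}{\tau}=-\nu\Delta^2h^{n+1}+A\Delta(h^{n+1}-h^n)+\Pi_N\nabla\cdot(g(\nabla h^n))$ with $h_0$ of mean zero. Then for every $n\ge0$, with $E_n=E(h^n)$, $$E_{n+1}-E_n+\Big(A+\frac12+\sqrt{\frac{2\nu}\tau}\Big)\|\nabla(h^{n+1}-h^n)\|_2^2\le\|\nabla(h^{n+1}-h^n)\|_2^2\cdot\frac32\max\{\|\nabla h^n\|_\infty^2,\|\nabla h^{n+1}\|_\infty^2\}.$$
   Context: $\mathbb T^2=\mathbb R^2/2\pi\mathbb Z^2$; $g(z)=(|z|^2-1)z$, $G(z)=\frac14(|z|^2-1)^2$; $E(h)=\frac\nu2\|\Delta h\|_2^2+\int_{\mathbb T^2}G(\nabla h)dx$; $\Pi_N$ is the $L^2$-orthogonal projection onto $X_N=\operatorname{span}\{\cos(k\cdot x),\sin(k\cdot x):|k|\le N\}$. *)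

From Stdlib Require Import Reals Lra ZArith List ClassicalEpsilon.
Open Scope R_scope.

(* Functions on T^2 = R^2 / 2piZ^2 are represented as 2pi-periodic maps R -> R -> R. *)
Definition fn2 := R -> R -> R.

Definition periodic2 (f : fn2) : Prop :=
  forall x y, f (x + 2 * PI) y = f x y /\ f x (y + 2 * PI) = f x y.

Definition cont2 (f : fn2) : Prop :=
  forall x y eps, 0 < eps -> exists d, 0 < d /\
    forall x' y', Rabs (x' - x) < d -> Rabs (y' - y) < d ->
      Rabs (f x' y' - f x y) < eps.

(* One-dimensional Riemann integral (Stdlib), independent of the proof term. *)
Definition Int1 (f : R -> R) (a b : R) : R :=
  epsilon (inhabits 0) (fun l => exists pr : Riemann_integrable f a b, RiemannInt pr = l).

Definition Int2 (f : fn2) : R :=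
  Int1 (fun x => Int1 (fun y => f x y) 0 (2 * PI)) 0 (2 * PI).

Definition pd1 (f : fn2) : fn2 := fun x y =>
  epsilon (inhabits 0) (fun l => derivable_pt_lim (fun t => f t y) x l).
Definition pd2 (f : fn2) : fn2 := fun x y =>
  epsilon (inhabits 0) (fun l => derivable_pt_lim (fun t => f x t) y l).

Definition lap (f : fn2) : fn2 := fun x y => pd1 (pd1 f) x y + pd2 (pd2 f) x y.

Definition sub2 (f g : fn2) : fn2 := fun x y => f x y - g x y.

Definition gradsq (f : fn2) : fn2 := fun x y => (pd1 f x y)^2 + (pd2 f x y)^2.

(* g(z) = (|z|^2-1) z,  G(z) = 1/4 (|z|^2-1)^2 *)
Definition G_of_grad (f : fn2) : fn2 := fun x y => / 4 * (gradsq f x y - 1)^2.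

Definition div_g_grad (f : fn2) : fn2 := fun x y =>
  pd1 (fun a b => (gradsq f a b - 1) * pd1 f a b) x y
  + pd2 (fun a b => (gradsq f a b - 1) * pd2 f a b) x y.

Definition energy (nu : R) (h : fn2) : R :=
  nu / 2 * Int2 (fun x y => (lap h x y)^2) + Int2 (G_of_grad h).

Definition grad_L2sq (f : fn2) : R := Int2 (gradsq f).

Definition grad_Linf (f : fn2) : R :=
  epsilon (inhabits 0)
    (fun M => is_lub (fun r => exists x y, r = sqrt (gradsq f x y)) M).

(* X_N = span{cos(k.x), sin(k.x) : k in Z^2, |k| <= N} *)
Definition trig_term (t : Z * Z * R * R) : fn2 := fun x y =>
  let '(k1, k2, a, b) := t in
  a * cos (IZR k1 * x + IZR k2 * y) + b * sin (IZR k1 * x + IZR k2 * y).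

Definition in_XN (N : nat) (h : fn2) : Prop :=
  exists l : list (Z * Z * R * R),
    Forall (fun t => let '(k1, k2, _, _) := t in
              (k1 * k1 + k2 * k2 <= Z.of_nat N * Z.of_nat N)%Z) l /\
    forall x y, h x y = fold_right (fun t acc => trig_term t x y + acc) 0 l.

Definition PiN (N : nat) (f : fn2) : fn2 :=
  epsilon (inhabits (fun _ _ => 0))
    (fun p => in_XN N p /\
       forall q, in_XN N q -> Int2 (fun x y => (f x y - p x y) * q x y) = 0).

(* Every iterate lies in the space of trigonometric polynomials, where partial
   derivatives and integrals over the torus are computed term by term.  There
   integration by parts and the symmetry of the Laplacian are exact identities,
   and Pi_N is truncation of the Fourier expansion.  Testing the scheme against
   d = h^{n+1} - h^n expresses the change of the quadratic part of the energy;
   the change of the nonlinear part is controlled by the pointwise inequality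
   G(q) <= G(p) + g(p).(q - p) + (3M/2 - 1/2)|q - p|^2 for |p|^2, |q|^2 <= M,
   and the term sqrt(2 nu / tau) comes from AM-GM between |d|^2 / tau and
   nu/2 |Delta d|^2, since |grad d|^2 integrates to - <Delta d, d>. *)

From Stdlib Require Import Reals Lra Lia ZArith List ClassicalEpsilon FunctionalExtensionality.
From Coquelicot Require Import Coquelicot.
Open Scope R_scope.

Ltac fext := apply functional_extensionality; intro; apply functional_extensionality; intro.

Lemma Int1_is_RInt f a b v : is_RInt f a b v -> Int1 f a b = v.
Proof.
  intro H. unfold Int1.
  assert (Hr : Riemann_integrable f a b) by (apply ex_RInt_Reals_0; eexists; eauto).
  assert (Hv : RiemannInt Hr = v).
  { rewrite <- RInt_Reals. now apply is_RInt_unique. }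
  destruct (epsilon_spec (inhabits 0)
              (fun l => exists pr : Riemann_integrable f a b, RiemannInt pr = l)) as [pr Hpr].
  { exists v, Hr; exact Hv. }
  rewrite <- Hpr, <- Hv. apply RiemannInt_P5.
Qed.

Lemma is_RInt_plus_R (f g : R -> R) a b u v :
  is_RInt f a b u -> is_RInt g a b v -> is_RInt (fun t => f t + g t) a b (u + v).
Proof. intros; apply (is_RInt_plus (V:=R_NormedModule)); auto. Qed.

Lemma is_RInt_scal_R (f : R -> R) a b c u :
  is_RInt f a b u -> is_RInt (fun t => c * f t) a b (c * u).
Proof. intros; apply (is_RInt_scal (V:=R_NormedModule)); auto. Qed.

Lemma is_RInt_const_R a b c : is_RInt (fun _ => c) a b ((b - a) * c).
Proof. exact (@is_RInt_const R_CompleteNormedModule a b c). Qed.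

Lemma is_RInt_zero_R a b : is_RInt (fun _ => 0) a b 0.
Proof.
  assert (H := is_RInt_const_R a b 0). rewrite Rmult_0_r in H. exact H.
Qed.

Lemma cos_add_Z_period x k : cos (x + IZR k * (2 * PI)) = cos x.
Proof.
  destruct k as [|p|p]; simpl.
  - f_equal; lra.
  - rewrite <- positive_nat_Z, <- INR_IZR_INZ.
    replace (INR (Pos.to_nat p) * (2 * PI)) with (2 * INR (Pos.to_nat p) * PI) by ring.
    apply cos_period.
  - rewrite <- (cos_period (x + IZR (Z.neg p) * (2 * PI)) (Pos.to_nat p)).
    f_equal. rewrite INR_IZR_INZ, positive_nat_Z, <- Pos2Z.opp_pos, opp_IZR. ring.
Qed.

Lemma sin_add_Z_period x k : sin (x + IZR k * (2 * PI)) = sin x.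
Proof.
  destruct k as [|p|p]; simpl.
  - f_equal; lra.
  - rewrite <- positive_nat_Z, <- INR_IZR_INZ.
    replace (INR (Pos.to_nat p) * (2 * PI)) with (2 * INR (Pos.to_nat p) * PI) by ring.
    apply sin_period.
  - rewrite <- (sin_period (x + IZR (Z.neg p) * (2 * PI)) (Pos.to_nat p)).
    f_equal. rewrite INR_IZR_INZ, positive_nat_Z, <- Pos2Z.opp_pos, opp_IZR. ring.
Qed.

Definition mode_integral (k : Z) (a b c : R) : R :=
  if Z.eq_dec k 0 then 2 * PI * (a * cos c + b * sin c) else 0.

Lemma is_RInt_mode k a b c :
  is_RInt (fun t => a * cos (IZR k * t + c) + b * sin (IZR k * t + c)) 0 (2 * PI)
    (mode_integral k a b c).
Proof.
  unfold mode_integral. destruct (Z.eq_dec k 0) as [->|Hk].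
  - rewrite <- (Rminus_0_r (2 * PI)) at 2.
    eapply is_RInt_ext; [|apply is_RInt_const_R].
    intros t _; simpl. rewrite Rmult_0_l, !Rplus_0_l. reflexivity.
  - assert (Hk' : IZR k <> 0) by (apply not_0_IZR; exact Hk).
    set (F := fun t => (a * sin (IZR k * t + c) - b * cos (IZR k * t + c)) / IZR k).
    assert (H : is_RInt (fun t => a * cos (IZR k * t + c) + b * sin (IZR k * t + c)) 0 (2 * PI)
                  (minus (F (2 * PI)) (F 0))).
    { apply (is_RInt_derive (V:=R_CompleteNormedModule)).
      - intros t _. unfold F. auto_derive; auto. field; auto.
      - intros t _. apply (ex_derive_continuous (K:=R_AbsRing) (V:=R_NormedModule)).
        auto_derive; auto. }
    replace (minus (F (2 * PI)) (F 0)) with 0 in H; [exact H|].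
    unfold F, minus, plus, opp; simpl.
    replace (IZR k * (2 * PI) + c) with (c + IZR k * (2 * PI)) by ring.
    rewrite cos_add_Z_period, sin_add_Z_period, Rmult_0_r, Rplus_0_l. field; auto.
Qed.

(** * Trigonometric polynomials *)

Definition term := (Z * Z * R * R)%type.

Definition trig_eval (l : list term) : fn2 := fun x y =>
  fold_right (fun t acc => trig_term t x y + acc) 0 l.

Definition trig_poly (f : fn2) : Prop := exists l, f = trig_eval l.

Lemma trig_eval_nil x y : trig_eval nil x y = 0.
Proof. reflexivity. Qed.

Lemma trig_eval_cons t l x y : trig_eval (t :: l) x y = trig_term t x y + trig_eval l x y.
Proof. reflexivity. Qed.

Lemma trig_eval_app l1 l2 x y :
  trig_eval (l1 ++ l2) x y = trig_eval l1 x y + trig_eval l2 x y.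
Proof.
  induction l1 as [|t l IH]; simpl app; rewrite ?trig_eval_cons, ?IH, ?trig_eval_nil; ring.
Qed.

Definition term_scale (c : R) (t : term) : term :=
  let '(k1, k2, a, b) := t in (k1, k2, c * a, c * b).

Lemma trig_eval_scale c l x y : trig_eval (map (term_scale c) l) x y = c * trig_eval l x y.
Proof.
  induction l as [|[[[k1 k2] a] b] l IH]; simpl map;
    rewrite ?trig_eval_cons, ?IH, ?trig_eval_nil; simpl; ring.
Qed.

(* Product-to-sum formulas. *)
Definition term_mul (t s : term) : list term :=
  let '(k1, k2, a, b) := t in let '(m1, m2, c, d) := s in
  ((k1 + m1)%Z, (k2 + m2)%Z, (a * c - b * d) / 2, (a * d + b * c) / 2) ::
  ((k1 - m1)%Z, (k2 - m2)%Z, (a * c + b * d) / 2, (b * c - a * d) / 2) :: nil.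

Definition trig_mul (l1 l2 : list term) : list term :=
  flat_map (fun t => flat_map (term_mul t) l2) l1.

Lemma trig_eval_term_mul t s x y :
  trig_eval (term_mul t s) x y = trig_term t x y * trig_term s x y.
Proof.
  destruct t as [[[k1 k2] a] b]; destruct s as [[[m1 m2] c] d]. unfold term_mul.
  rewrite !trig_eval_cons, trig_eval_nil. simpl.
  rewrite !plus_IZR, !minus_IZR.
  set (u := IZR k1 * x + IZR k2 * y). set (v := IZR m1 * x + IZR m2 * y).
  replace ((IZR k1 + IZR m1) * x + (IZR k2 + IZR m2) * y) with (u + v) by (unfold u, v; ring).
  replace ((IZR k1 - IZR m1) * x + (IZR k2 - IZR m2) * y) with (u - v) by (unfold u, v; ring).
  rewrite cos_plus, cos_minus, sin_plus, sin_minus. field.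
Qed.

Lemma trig_eval_mul l1 l2 x y : trig_eval (trig_mul l1 l2) x y = trig_eval l1 x y * trig_eval l2 x y.
Proof.
  assert (Hrow : forall t, trig_eval (flat_map (term_mul t) l2) x y = trig_term t x y * trig_eval l2 x y).
  { intro t. induction l2 as [|s l IH]; cbn [flat_map];
      rewrite ?trig_eval_app, ?IH, ?trig_eval_term_mul, ?trig_eval_cons, ?trig_eval_nil; ring. }
  unfold trig_mul. induction l1 as [|t l IH]; cbn [flat_map];
    rewrite ?trig_eval_app, ?IH, ?Hrow, ?trig_eval_cons, ?trig_eval_nil; ring.
Qed.

Definition term_d1 (t : term) : term :=
  let '(k1, k2, a, b) := t in (k1, k2, IZR k1 * b, - (IZR k1 * a)).
Definition term_d2 (t : term) : term :=
  let '(k1, k2, a, b) := t in (k1, k2, IZR k2 * b, - (IZR k2 * a)).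

Lemma derivable_pt_lim_trig_eval_1 l x y :
  derivable_pt_lim (fun t => trig_eval l t y) x (trig_eval (map term_d1 l) x y).
Proof.
  induction l as [|[[[k1 k2] a] b] l IH]; simpl map.
  - apply derivable_pt_lim_const.
  - rewrite trig_eval_cons.
    apply (derivable_pt_lim_plus (fun t => trig_term _ t y) (fun t => trig_eval l t y)); auto.
    apply is_derive_Reals. simpl. auto_derive; auto. ring.
Qed.

Lemma derivable_pt_lim_trig_eval_2 l x y :
  derivable_pt_lim (fun t => trig_eval l x t) y (trig_eval (map term_d2 l) x y).
Proof.
  induction l as [|[[[k1 k2] a] b] l IH]; simpl map.
  - apply derivable_pt_lim_const.
  - rewrite trig_eval_cons.
    apply (derivable_pt_lim_plus (fun t => trig_term _ x t) (fun t => trig_eval l x t)); auto.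
    apply is_derive_Reals. simpl. auto_derive; auto. ring.
Qed.

Lemma trig_eval_bounded l : exists B, forall x y, Rabs (trig_eval l x y) <= B.
Proof.
  induction l as [|[[[k1 k2] a] b] l [B HB]].
  - exists 0; intros; rewrite trig_eval_nil, Rabs_R0; lra.
  - exists (Rabs a + Rabs b + B). intros x y. rewrite trig_eval_cons. simpl.
    set (w := IZR k1 * x + IZR k2 * y).
    eapply Rle_trans; [apply Rabs_triang|]. apply Rplus_le_compat; [|apply HB].
    eapply Rle_trans; [apply Rabs_triang|]. rewrite !Rabs_mult.
    assert (Rabs (cos w) <= 1) by (apply Rabs_le, COS_bound).
    assert (Rabs (sin w) <= 1) by (apply Rabs_le, SIN_bound).
    pose proof (Rabs_pos a); pose proof (Rabs_pos b); pose proof (Rabs_pos (cos w));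
      pose proof (Rabs_pos (sin w)). nra.
Qed.

(* The integral over the torus only sees the constant modes. *)
Definition term_mean (t : term) : R :=
  let '(k1, k2, a, _) := t in
  if Z.eq_dec k1 0 then if Z.eq_dec k2 0 then a else 0 else 0.

Definition mean_coef (l : list term) : R := fold_right (fun t acc => term_mean t + acc) 0 l.

Definition y_integral (l : list term) (x : R) : R :=
  fold_right (fun t acc => (let '(k1, k2, a, b) := t in mode_integral k2 a b (IZR k1 * x)) + acc) 0 l.

Lemma is_RInt_trig_eval_y l x : is_RInt (fun y => trig_eval l x y) 0 (2 * PI) (y_integral l x).
Proof.
  induction l as [|[[[k1 k2] a] b] l IH]; simpl.
  - apply is_RInt_zero_R.
  - apply is_RInt_plus_R; auto.
    eapply is_RInt_ext; [|apply (is_RInt_mode k2 a b (IZR k1 * x))].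
    intros y _; simpl. rewrite (Rplus_comm (IZR k1 * x)). reflexivity.
Qed.

Lemma is_RInt_y_integral l : is_RInt (y_integral l) 0 (2 * PI) (2 * PI * (2 * PI * mean_coef l)).
Proof.
  induction l as [|[[[k1 k2] a] b] l IH]; cbn -[mode_integral term_mean].
  - rewrite !Rmult_0_r. apply is_RInt_zero_R.
  - rewrite !Rmult_plus_distr_l. apply is_RInt_plus_R; [|exact IH].
    assert (Hmean : 2 * PI * (2 * PI * term_mean (k1, k2, a, b))
                    = if Z.eq_dec k2 0 then 2 * PI * mode_integral k1 a b 0 else 0).
    { unfold term_mean, mode_integral.
      destruct (Z.eq_dec k1 0); destruct (Z.eq_dec k2 0); rewrite ?cos_0, ?sin_0; ring. }
    rewrite Hmean. unfold mode_integral at 1. destruct (Z.eq_dec k2 0).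
    + eapply is_RInt_ext; [|apply is_RInt_scal_R, is_RInt_mode].
      intros y _; simpl. rewrite Rplus_0_r. reflexivity.
    + apply is_RInt_zero_R.
Qed.

Lemma Int2_trig_eval l : Int2 (trig_eval l) = 2 * PI * (2 * PI * mean_coef l).
Proof.
  unfold Int2.
  replace (fun x => Int1 (fun y => trig_eval l x y) 0 (2 * PI)) with (y_integral l).
  - apply Int1_is_RInt, is_RInt_y_integral.
  - apply functional_extensionality; intro x. symmetry. apply Int1_is_RInt, is_RInt_trig_eval_y.
Qed.

Lemma mean_coef_app l1 l2 : mean_coef (l1 ++ l2) = mean_coef l1 + mean_coef l2.
Proof. induction l1 as [|t l IH]; simpl; [|rewrite IH]; ring. Qed.

Lemma mean_coef_scale c l : mean_coef (map (term_scale c) l) = c * mean_coef l.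
Proof.
  induction l as [|[[[k1 k2] a] b] l IH]; simpl; rewrite ?IH; [ring|].
  destruct (Z.eq_dec k1 0); [destruct (Z.eq_dec k2 0)|]; ring.
Qed.

Lemma mean_coef_d1 l : mean_coef (map term_d1 l) = 0.
Proof.
  induction l as [|[[[k1 k2] a] b] l IH]; simpl; rewrite ?IH; [reflexivity|].
  destruct (Z.eq_dec k1 0) as [->|]; [destruct (Z.eq_dec k2 0)|]; ring.
Qed.

Lemma mean_coef_d2 l : mean_coef (map term_d2 l) = 0.
Proof.
  induction l as [|[[[k1 k2] a] b] l IH]; simpl; rewrite ?IH; [reflexivity|].
  destruct (Z.eq_dec k1 0); [destruct (Z.eq_dec k2 0) as [->|]|]; ring.
Qed.

Lemma mean_coef_flat_map (g : term -> list term) l :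
  (forall t, In t l -> mean_coef (g t) = 0) -> mean_coef (flat_map g l) = 0.
Proof.
  induction l as [|t l IH]; simpl; intros H; [reflexivity|].
  rewrite mean_coef_app, H, IH; auto. ring.
Qed.

Definition low_mode (N : nat) (t : term) : Prop :=
  let '(k1, k2, _, _) := t in (k1 * k1 + k2 * k2 <= Z.of_nat N * Z.of_nat N)%Z.

(* A mode above N times a mode at most N never produces the zero frequency. *)
Lemma mean_coef_mul_high_low N l1 l2 :
  (forall t, In t l1 -> ~ low_mode N t) -> List.Forall (low_mode N) l2 ->
  mean_coef (trig_mul l1 l2) = 0.
Proof.
  intros H1 H2. apply mean_coef_flat_map. intros t Ht. apply mean_coef_flat_map. intros s Hs.
  specialize (H1 t Ht). rewrite List.Forall_forall in H2. specialize (H2 s Hs).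
  destruct t as [[[k1 k2] a] b]; destruct s as [[[m1 m2] c] d]. simpl in H1, H2 |- *.
  destruct (Z.eq_dec (k1 + m1) 0); [destruct (Z.eq_dec (k2 + m2) 0)|];
  (destruct (Z.eq_dec (k1 - m1) 0); [destruct (Z.eq_dec (k2 - m2) 0)|]);
  try (exfalso; nia); ring.
Qed.

Lemma trig_poly_const c : trig_poly (fun _ _ => c).
Proof.
  exists ((0%Z, 0%Z, c, 0) :: nil). fext.
  rewrite trig_eval_cons, trig_eval_nil; simpl. rewrite !Rmult_0_l, Rplus_0_l, cos_0. ring.
Qed.

Lemma trig_poly_plus f g : trig_poly f -> trig_poly g -> trig_poly (fun x y => f x y + g x y).
Proof. intros [l1 ->] [l2 ->]. exists (l1 ++ l2). fext. now rewrite trig_eval_app. Qed.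

Lemma trig_poly_scal c f : trig_poly f -> trig_poly (fun x y => c * f x y).
Proof. intros [l ->]. exists (map (term_scale c) l). fext. now rewrite trig_eval_scale. Qed.

Lemma trig_poly_minus f g : trig_poly f -> trig_poly g -> trig_poly (fun x y => f x y - g x y).
Proof.
  intros Hf Hg. destruct (trig_poly_plus _ _ Hf (trig_poly_scal (-1) g Hg)) as [l Hl].
  exists l. rewrite <- Hl. fext. ring.
Qed.

Lemma trig_poly_mult f g : trig_poly f -> trig_poly g -> trig_poly (fun x y => f x y * g x y).
Proof. intros [l1 ->] [l2 ->]. exists (trig_mul l1 l2). fext. now rewrite trig_eval_mul. Qed.

Lemma trig_poly_pow f n : trig_poly f -> trig_poly (fun x y => f x y ^ n).
Proof.
  intro Hf. induction n as [|n IH]; simpl.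
  - apply trig_poly_const.
  - apply (trig_poly_mult f (fun x y => f x y ^ n)); auto.
Qed.

Lemma pd1_unique f D : (forall x y, derivable_pt_lim (fun t => f t y) x (D x y)) -> pd1 f = D.
Proof.
  intro H. fext. unfold pd1. eapply uniqueness_limite; [|apply H].
  apply (epsilon_spec (inhabits 0) (fun l => derivable_pt_lim _ _ l)). eexists; apply H.
Qed.

Lemma pd2_unique f D : (forall x y, derivable_pt_lim (fun t => f x t) y (D x y)) -> pd2 f = D.
Proof.
  intro H. fext. unfold pd2. eapply uniqueness_limite; [|apply H].
  apply (epsilon_spec (inhabits 0) (fun l => derivable_pt_lim _ _ l)). eexists; apply H.
Qed.

Lemma pd1_trig_eval l : pd1 (trig_eval l) = trig_eval (map term_d1 l).
Proof. apply pd1_unique. intros; apply derivable_pt_lim_trig_eval_1. Qed.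

Lemma pd2_trig_eval l : pd2 (trig_eval l) = trig_eval (map term_d2 l).
Proof. apply pd2_unique. intros; apply derivable_pt_lim_trig_eval_2. Qed.

Lemma trig_poly_pd1 f : trig_poly f -> trig_poly (pd1 f).
Proof. intros [l ->]. exists (map term_d1 l). apply pd1_trig_eval. Qed.

Lemma trig_poly_pd2 f : trig_poly f -> trig_poly (pd2 f).
Proof. intros [l ->]. exists (map term_d2 l). apply pd2_trig_eval. Qed.

Lemma trig_poly_lap f : trig_poly f -> trig_poly (lap f).
Proof.
  intro H. apply trig_poly_plus; [apply trig_poly_pd1, trig_poly_pd1|apply trig_poly_pd2, trig_poly_pd2];
    exact H.
Qed.

Lemma trig_poly_gradsq f : trig_poly f -> trig_poly (gradsq f).
Proof.
  intro H. apply trig_poly_plus; apply trig_poly_pow; [apply trig_poly_pd1|apply trig_poly_pd2]; exact H.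
Qed.

Ltac trig := repeat first
  [ assumption | apply trig_poly_const | apply trig_poly_lap | apply trig_poly_minus
  | apply trig_poly_gradsq | apply trig_poly_pd1 | apply trig_poly_pd2 | apply trig_poly_pow
  | apply trig_poly_plus | apply trig_poly_scal | apply trig_poly_mult | unfold sub2 ].

Lemma trig_poly_G_of_grad f : trig_poly f -> trig_poly (G_of_grad f).
Proof. intro H. unfold G_of_grad. trig. Qed.

Lemma trig_poly_div_g_grad f : trig_poly f -> trig_poly (div_g_grad f).
Proof. intro H. unfold div_g_grad. trig. Qed.

Lemma derivable_pt_lim_pd1 f x y :
  trig_poly f -> derivable_pt_lim (fun t => f t y) x (pd1 f x y).
Proof. intros [l ->]. rewrite pd1_trig_eval. apply derivable_pt_lim_trig_eval_1. Qed.

Lemma derivable_pt_lim_pd2 f x y :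
  trig_poly f -> derivable_pt_lim (fun t => f x t) y (pd2 f x y).
Proof. intros [l ->]. rewrite pd2_trig_eval. apply derivable_pt_lim_trig_eval_2. Qed.

Lemma pd1_minus f g : trig_poly f -> trig_poly g ->
  pd1 (fun x y => f x y - g x y) = (fun x y => pd1 f x y - pd1 g x y).
Proof.
  intros. apply pd1_unique. intros. apply derivable_pt_lim_minus; apply derivable_pt_lim_pd1; auto.
Qed.

Lemma pd2_minus f g : trig_poly f -> trig_poly g ->
  pd2 (fun x y => f x y - g x y) = (fun x y => pd2 f x y - pd2 g x y).
Proof.
  intros. apply pd2_unique. intros. apply derivable_pt_lim_minus; apply derivable_pt_lim_pd2; auto.
Qed.

Lemma pd1_mult f g : trig_poly f -> trig_poly g ->
  pd1 (fun x y => f x y * g x y) = (fun x y => pd1 f x y * g x y + f x y * pd1 g x y).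
Proof.
  intros. apply pd1_unique. intros.
  apply (derivable_pt_lim_mult (fun t => f t y) (fun t => g t y)); apply derivable_pt_lim_pd1; auto.
Qed.

Lemma pd2_mult f g : trig_poly f -> trig_poly g ->
  pd2 (fun x y => f x y * g x y) = (fun x y => pd2 f x y * g x y + f x y * pd2 g x y).
Proof.
  intros. apply pd2_unique. intros.
  apply (derivable_pt_lim_mult (fun t => f x t) (fun t => g x t)); apply derivable_pt_lim_pd2; auto.
Qed.

Lemma lap_sub2 f g : trig_poly f -> trig_poly g ->
  lap (sub2 f g) = (fun x y => lap f x y - lap g x y).
Proof.
  intros. fext. unfold lap, sub2. rewrite (pd1_minus f g), (pd2_minus f g) by auto.
  rewrite (pd1_minus (pd1 f) (pd1 g)), (pd2_minus (pd2 f) (pd2 g)) by trig. ring.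
Qed.

Lemma pd1_sub2 f g x y : trig_poly f -> trig_poly g -> pd1 (sub2 f g) x y = pd1 f x y - pd1 g x y.
Proof. intros. unfold sub2. now rewrite pd1_minus. Qed.

Lemma pd2_sub2 f g x y : trig_poly f -> trig_poly g -> pd2 (sub2 f g) x y = pd2 f x y - pd2 g x y.
Proof. intros. unfold sub2. now rewrite pd2_minus. Qed.

Lemma Int2_ext f g : (forall x y, f x y = g x y) -> Int2 f = Int2 g.
Proof. intro H. f_equal. fext. apply H. Qed.

Lemma Int2_plus f g : trig_poly f -> trig_poly g ->
  Int2 (fun x y => f x y + g x y) = Int2 f + Int2 g.
Proof.
  intros [l1 ->] [l2 ->]. rewrite (Int2_ext _ (trig_eval (l1 ++ l2))) by (intros; symmetry; apply trig_eval_app).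
  rewrite !Int2_trig_eval, mean_coef_app. ring.
Qed.

Lemma Int2_scal c f : trig_poly f -> Int2 (fun x y => c * f x y) = c * Int2 f.
Proof.
  intros [l ->]. rewrite (Int2_ext _ (trig_eval (map (term_scale c) l))) by (intros; symmetry; apply trig_eval_scale).
  rewrite !Int2_trig_eval, mean_coef_scale. ring.
Qed.

Lemma Int2_minus f g : trig_poly f -> trig_poly g ->
  Int2 (fun x y => f x y - g x y) = Int2 f - Int2 g.
Proof.
  intros. rewrite (Int2_ext _ (fun x y => f x y + (-1) * g x y)) by (intros; ring).
  rewrite Int2_plus, Int2_scal by trig. ring.
Qed.

Lemma Int2_ge_0 f : trig_poly f -> (forall x y, 0 <= f x y) -> 0 <= Int2 f.
Proof.
  intros [l ->] H. rewrite Int2_trig_eval. pose proof PI_RGT_0.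
  apply (is_RInt_ge_0 (y_integral l) 0 (2 * PI)); [lra|apply is_RInt_y_integral|].
  intros x _. apply (is_RInt_ge_0 (fun y => trig_eval l x y) 0 (2 * PI));
    [lra|apply is_RInt_trig_eval_y|auto].
Qed.

Lemma Int2_le f g : trig_poly f -> trig_poly g -> (forall x y, f x y <= g x y) -> Int2 f <= Int2 g.
Proof.
  intros Hf Hg H. cut (0 <= Int2 (fun x y => g x y - f x y)).
  - rewrite Int2_minus by auto. lra.
  - apply Int2_ge_0; [trig|]. intros x y. specialize (H x y). lra.
Qed.

Lemma Int2_pd1 f : trig_poly f -> Int2 (pd1 f) = 0.
Proof. intros [l ->]. rewrite pd1_trig_eval, Int2_trig_eval, mean_coef_d1. ring. Qed.

Lemma Int2_pd2 f : trig_poly f -> Int2 (pd2 f) = 0.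
Proof. intros [l ->]. rewrite pd2_trig_eval, Int2_trig_eval, mean_coef_d2. ring. Qed.

Lemma Int2_pd1_mult u v : trig_poly u -> trig_poly v ->
  Int2 (fun x y => pd1 u x y * v x y) = - Int2 (fun x y => u x y * pd1 v x y).
Proof.
  intros Hu Hv. assert (H := Int2_pd1 (fun x y => u x y * v x y) ltac:(trig)).
  rewrite pd1_mult, Int2_plus in H by trig. lra.
Qed.

Lemma Int2_pd2_mult u v : trig_poly u -> trig_poly v ->
  Int2 (fun x y => pd2 u x y * v x y) = - Int2 (fun x y => u x y * pd2 v x y).
Proof.
  intros Hu Hv. assert (H := Int2_pd2 (fun x y => u x y * v x y) ltac:(trig)).
  rewrite pd2_mult, Int2_plus in H by trig. lra.
Qed.

Lemma Int2_div_mult w1 w2 d : trig_poly w1 -> trig_poly w2 -> trig_poly d ->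
  Int2 (fun x y => (pd1 w1 x y + pd2 w2 x y) * d x y)
  = - Int2 (fun x y => w1 x y * pd1 d x y + w2 x y * pd2 d x y).
Proof.
  intros. rewrite (Int2_ext _ (fun x y => pd1 w1 x y * d x y + pd2 w2 x y * d x y)) by (intros; ring).
  rewrite !Int2_plus, Int2_pd1_mult, Int2_pd2_mult by trig. ring.
Qed.

Lemma Int2_lap_mult W d : trig_poly W -> trig_poly d ->
  Int2 (fun x y => lap W x y * d x y)
  = - Int2 (fun x y => pd1 W x y * pd1 d x y + pd2 W x y * pd2 d x y).
Proof. intros. apply Int2_div_mult; trig. Qed.

Lemma Int2_lap_sym W d : trig_poly W -> trig_poly d ->
  Int2 (fun x y => lap W x y * d x y) = Int2 (fun x y => W x y * lap d x y).
Proof.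
  intros. rewrite Int2_lap_mult by auto.
  rewrite (Int2_ext (fun x y => W x y * lap d x y) (fun x y => lap d x y * W x y)) by (intros; ring).
  rewrite Int2_lap_mult by auto. f_equal. apply Int2_ext. intros; ring.
Qed.

Lemma Int2_lap_self d : trig_poly d -> Int2 (fun x y => lap d x y * d x y) = - grad_L2sq d.
Proof.
  intros. rewrite Int2_lap_mult by auto. unfold grad_L2sq, gradsq.
  f_equal. apply Int2_ext. intros; ring.
Qed.

Definition g_grad_dot (u d : fn2) : fn2 := fun x y =>
  (gradsq u x y - 1) * (pd1 u x y * pd1 d x y + pd2 u x y * pd2 d x y).

Lemma Int2_div_g_grad_mult u d : trig_poly u -> trig_poly d ->
  Int2 (fun x y => div_g_grad u x y * d x y) = - Int2 (g_grad_dot u d).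
Proof.
  intros. unfold div_g_grad. rewrite Int2_div_mult by trig.
  f_equal. apply Int2_ext. intros; unfold g_grad_dot; ring.
Qed.

Lemma Int2_lap_sq_sub2 u v : trig_poly u -> trig_poly v ->
  Int2 (fun x y => lap u x y ^ 2)
  = Int2 (fun x y => lap v x y ^ 2) - 2 * Int2 (fun x y => lap v x y * lap (sub2 v u) x y)
    + Int2 (fun x y => lap (sub2 v u) x y * lap (sub2 v u) x y).
Proof.
  intros. rewrite <- Int2_scal, <- Int2_minus, <- Int2_plus by trig.
  apply Int2_ext. intros x y. rewrite lap_sub2 by auto. ring.
Qed.

(** * The space X_N and the projection Pi_N *)

Lemma in_XN_trig_poly N f : in_XN N f -> trig_poly f.
Proof. intros [l [_ H]]. exists l. fext. apply H. Qed.

Lemma in_XN_sub2 N f g : in_XN N f -> in_XN N g -> in_XN N (sub2 f g).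
Proof.
  intros [l1 [F1 H1]] [l2 [F2 H2]]. exists (l1 ++ map (term_scale (-1)) l2). split.
  - apply List.Forall_app; split; auto. apply List.Forall_map.
    eapply List.Forall_impl; [|exact F2]. intros [[[k1 k2] a] b]; simpl; auto.
  - intros x y. unfold sub2. rewrite H1, H2.
    change (fold_right _ 0 (l1 ++ map (term_scale (-1)) l2))
      with (trig_eval (l1 ++ map (term_scale (-1)) l2) x y).
    rewrite trig_eval_app, trig_eval_scale. unfold trig_eval. ring.
Qed.

Definition is_low_mode (N : nat) (t : term) : bool :=
  let '(k1, k2, _, _) := t in Z.leb (k1 * k1 + k2 * k2) (Z.of_nat N * Z.of_nat N).

Lemma is_low_modeP N t : is_low_mode N t = true <-> low_mode N t.
Proof. destruct t as [[[k1 k2] a] b]. apply Z.leb_le. Qed.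

Lemma trig_eval_filter_split (p : term -> bool) l x y :
  trig_eval l x y = trig_eval (filter p l) x y + trig_eval (filter (fun t => negb (p t)) l) x y.
Proof.
  induction l as [|t l IH]; [rewrite !trig_eval_nil; ring|].
  cbn [filter]. destruct (p t); cbn [negb]; rewrite !trig_eval_cons, IH; ring.
Qed.

Lemma PiN_spec N F : trig_poly F ->
  in_XN N (PiN N F) /\
  forall q, in_XN N q -> Int2 (fun x y => (F x y - PiN N F x y) * q x y) = 0.
Proof.
  intros [lF ->]. unfold PiN.
  apply (epsilon_spec (inhabits (fun _ _ => 0)) (fun p => in_XN N p /\ _)).
  exists (trig_eval (filter (is_low_mode N) lF)). split.
  - exists (filter (is_low_mode N) lF). split; [|reflexivity].
    apply List.Forall_forall. intros t Ht. apply filter_In in Ht as [_ Ht]. now apply is_low_modeP.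
  - intros q [lq [Fq Hq]].
    rewrite (Int2_ext _ (trig_eval (trig_mul (filter (fun t => negb (is_low_mode N t)) lF) lq))).
    + rewrite Int2_trig_eval, (mean_coef_mul_high_low N); [ring| |exact Fq].
      intros t Ht Hlow. apply filter_In in Ht as [_ Ht].
      apply is_low_modeP in Hlow. rewrite Hlow in Ht. discriminate.
    + intros x y. rewrite trig_eval_mul, Hq, (trig_eval_filter_split (is_low_mode N) lF x y).
      unfold trig_eval; ring.
Qed.

Lemma Int2_PiN_mult N F q : trig_poly F -> in_XN N q ->
  Int2 (fun x y => PiN N F x y * q x y) = Int2 (fun x y => F x y * q x y).
Proof.
  intros HF Hq. destruct (PiN_spec N F HF) as [HP Horth].
  apply in_XN_trig_poly in HP. pose proof (in_XN_trig_poly _ _ Hq).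
  specialize (Horth q Hq).
  rewrite (Int2_ext _ (fun x y => F x y * q x y - PiN N F x y * q x y)) in Horth by (intros; ring).
  rewrite Int2_minus in Horth by trig. lra.
Qed.

(** * The energy estimate *)

Lemma gradsq_le_grad_Linf f x y : trig_poly f -> gradsq f x y <= grad_Linf f ^ 2.
Proof.
  intro Hf.
  destruct (trig_poly_pd1 f Hf) as [l1 E1]; destruct (trig_poly_pd2 f Hf) as [l2 E2].
  destruct (trig_eval_bounded l1) as [B1 HB1]; destruct (trig_eval_bounded l2) as [B2 HB2].
  set (E := fun r => exists x y, r = sqrt (gradsq f x y)).
  assert (Hbound : bound E).
  { exists (sqrt (B1 ^ 2 + B2 ^ 2)). intros r [a [b ->]]. apply sqrt_le_1_alt.
    specialize (HB1 a b); specialize (HB2 a b). rewrite <- E1 in HB1; rewrite <- E2 in HB2.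
    unfold gradsq. rewrite <- (pow2_abs (pd1 f a b)), <- (pow2_abs (pd2 f a b)).
    pose proof (Rabs_pos (pd1 f a b)); pose proof (Rabs_pos (pd2 f a b)). nra. }
  destruct (completeness E Hbound (ex_intro _ _ (ex_intro _ x (ex_intro _ y eq_refl))))
    as [M HM].
  assert (HL := epsilon_spec (inhabits 0) (is_lub E) (ex_intro _ M HM)).
  unfold grad_Linf. fold E.
  set (L := epsilon (inhabits 0) (is_lub E)) in *.
  assert (H1 : sqrt (gradsq f x y) <= L) by (apply (proj1 HL); exists x, y; reflexivity).
  assert (H0 : 0 <= gradsq f x y) by (unfold gradsq; nra).
  pose proof (sqrt_sqrt _ H0); pose proof (sqrt_pos (gradsq f x y)). nra.
Qed.

Lemma G_step_le (p1 p2 q1 q2 M : R) : p1 ^ 2 + p2 ^ 2 <= M -> q1 ^ 2 + q2 ^ 2 <= M ->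
  / 4 * (q1 ^ 2 + q2 ^ 2 - 1) ^ 2 <= / 4 * (p1 ^ 2 + p2 ^ 2 - 1) ^ 2
    + (p1 ^ 2 + p2 ^ 2 - 1) * (p1 * (q1 - p1) + p2 * (q2 - p2))
    + (3 / 2 * M - 1 / 2) * ((q1 - p1) ^ 2 + (q2 - p2) ^ 2).
Proof.
  intros Hs Ht.
  set (s := p1 ^ 2 + p2 ^ 2) in *. set (t := q1 ^ 2 + q2 ^ 2) in *.
  set (q := (q1 - p1) ^ 2 + (q2 - p2) ^ 2).
  assert (Hexact : / 4 * (t - 1) ^ 2 - / 4 * (s - 1) ^ 2 - (s - 1) * (p1 * (q1 - p1) + p2 * (q2 - p2))
                   = (s - 1) * q / 2 + (t - s) ^ 2 / 4) by (unfold s, t, q; field).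
  (* Cauchy-Schwarz, since t - s = (q - p).(q + p) and |q + p|^2 = 2 (s + t) - |q - p|^2. *)
  assert (HCS : (t - s) ^ 2 <= q * (2 * (s + t) - q)).
  { assert (0 <= ((q1 - p1) * (q2 + p2) - (q2 - p2) * (q1 + p1)) ^ 2) by apply pow2_ge_0.
    unfold s, t, q. nra. }
  assert (Hq : 0 <= q) by (unfold q; pose proof (pow2_ge_0 (q1 - p1)); pose proof (pow2_ge_0 (q2 - p2)); lra).
  assert (q * (2 * (s + t) - q) <= q * (4 * M)) by (apply Rmult_le_compat_l; lra).
  assert (s * q <= M * q) by (apply Rmult_le_compat_r; lra).
  lra.
Qed.

Lemma amgm_sqrt_ratio nu tau a D : 0 < nu -> 0 < tau ->
  sqrt (2 * nu / tau) * (- (D * a)) <= / tau * (a * a) + nu / 2 * (D * D).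
Proof.
  intros Hnu Htau. set (r := sqrt (2 * nu / tau)).
  assert (Hr : r * r = 2 * nu / tau) by (apply sqrt_sqrt; apply Rdiv_le_0_compat; lra).
  assert (Hsq : / tau * (a * a) + nu / 2 * (D * D) - r * (- (D * a))
                = / tau * (a + r * tau * D / 2) ^ 2).
  { replace (nu / 2) with (r * r * tau / 4) by (rewrite Hr; field; lra). field; lra. }
  assert (0 <= / tau * (a + r * tau * D / 2) ^ 2).
  { apply Rmult_le_pos; [left; apply Rinv_0_lt_compat; lra|apply pow2_ge_0]. }
  lra.
Qed.

Lemma Int2_G_of_grad_le M u v : trig_poly u -> trig_poly v ->
  (forall x y, gradsq u x y <= M) -> (forall x y, gradsq v x y <= M) ->
  Int2 (G_of_grad v)
  <= Int2 (G_of_grad u) + Int2 (g_grad_dot u (sub2 v u)) + (3 / 2 * M - 1 / 2) * grad_L2sq (sub2 v u).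
Proof.
  intros Hu Hv HMu HMv. unfold grad_L2sq.
  rewrite <- Int2_scal, <- !Int2_plus by (unfold g_grad_dot; trig; apply trig_poly_G_of_grad; auto).
  apply Int2_le; [apply trig_poly_G_of_grad; auto|unfold g_grad_dot; trig; apply trig_poly_G_of_grad; auto|].
  intros x y. unfold G_of_grad, g_grad_dot. unfold gradsq. rewrite !pd1_sub2, !pd2_sub2 by auto.
  apply G_step_le; [apply (HMu x y)|apply (HMv x y)].
Qed.

Lemma grad_L2sq_le_amgm nu tau d : 0 < nu -> 0 < tau -> trig_poly d ->
  sqrt (2 * nu / tau) * grad_L2sq d
  <= / tau * Int2 (fun x y => d x y * d x y) + nu / 2 * Int2 (fun x y => lap d x y * lap d x y).
Proof.
  intros Hnu Htau Hd. set (r := sqrt (2 * nu / tau)).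
  cut (0 <= Int2 (fun x y => / tau * (d x y * d x y) + nu / 2 * (lap d x y * lap d x y)
                             + r * (lap d x y * d x y))).
  - rewrite !Int2_plus, !Int2_scal, Int2_lap_self by trig. lra.
  - apply Int2_ge_0; [trig|]. intros x y.
    pose proof (amgm_sqrt_ratio nu tau (d x y) (lap d x y) Hnu Htau). fold r in H. lra.
Qed.

Section EnergyStep.

Variables (nu tau A M : R) (N : nat) (u v : fn2).

Hypotheses (Hnu : 0 < nu) (Htau : 0 < tau) (Hu : in_XN N u) (Hv : in_XN N v)
  (HMu : forall x y, gradsq u x y <= M) (HMv : forall x y, gradsq v x y <= M).

Hypothesis Hscheme : forall x y,
  (v x y - u x y) / tau =
    - nu * lap (lap v) x y + A * lap (sub2 v u) x y + PiN N (div_g_grad u) x y.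

Lemma trig_poly_u : trig_poly u. Proof. exact (in_XN_trig_poly N u Hu). Qed.
Lemma trig_poly_v : trig_poly v. Proof. exact (in_XN_trig_poly N v Hv). Qed.

Lemma scheme_tested_increment :
  / tau * Int2 (fun x y => sub2 v u x y * sub2 v u x y)
  + nu * Int2 (fun x y => lap v x y * lap (sub2 v u) x y) + A * grad_L2sq (sub2 v u)
  = - Int2 (g_grad_dot u (sub2 v u)).
Proof.
  pose proof trig_poly_u; pose proof trig_poly_v.
  set (d := sub2 v u). assert (Hd : trig_poly d) by (unfold d; trig).
  assert (Hproj : Int2 (fun x y => PiN N (div_g_grad u) x y * d x y) = - Int2 (g_grad_dot u d)).
  { rewrite (Int2_PiN_mult N) by (apply trig_poly_div_g_grad || apply in_XN_sub2; auto).
    now apply Int2_div_g_grad_mult. }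
  rewrite <- Hproj, (Int2_ext (fun x y => PiN N (div_g_grad u) x y * d x y)
             (fun x y => / tau * (d x y * d x y)
             + (nu * (lap (lap v) x y * d x y) + (- A) * (lap d x y * d x y)))).
  - rewrite !Int2_plus, !Int2_scal, Int2_lap_self, (Int2_lap_sym (lap v) d) by trig. ring.
  - intros x y. specialize (Hscheme x y). fold d in Hscheme.
    assert (Hdxy : d x y = v x y - u x y) by reflexivity.
    rewrite <- Hdxy in Hscheme.
    replace (PiN N (div_g_grad u) x y) with (d x y / tau + nu * lap (lap v) x y - A * lap d x y)
      by lra.
    field. lra.
Qed.

Lemma energy_step :
  energy nu v - energy nu u + (A + 1 / 2 + sqrt (2 * nu / tau)) * grad_L2sq (sub2 v u)
  <= grad_L2sq (sub2 v u) * (3 / 2) * M.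
Proof.
  pose proof trig_poly_u; pose proof trig_poly_v.
  pose proof (Int2_lap_sq_sub2 u v ltac:(auto) ltac:(auto)) as Hlap.
  pose proof (Int2_G_of_grad_le M u v ltac:(auto) ltac:(auto) HMu HMv) as HG.
  pose proof (grad_L2sq_le_amgm nu tau (sub2 v u) Hnu Htau ltac:(trig)) as Hamgm.
  pose proof scheme_tested_increment as Htest.
  unfold energy. rewrite Hlap. nra.
Qed.

End EnergyStep.

Theorem lemma2p4 (nu tau A : R) (N : nat) (h0 : fn2) (h : nat -> fn2) :
  0 < nu -> 0 < tau -> 0 < A -> (2 <= N)%nat ->
  periodic2 h0 -> cont2 h0 -> Int2 h0 = 0 ->
  h 0%nat = PiN N h0 ->
  (forall n, in_XN N (h n)) ->
  (forall n x y,
     (h (S n) x y - h n x y) / tau =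
       - nu * lap (lap (h (S n))) x y
       + A * lap (sub2 (h (S n)) (h n)) x y
       + PiN N (div_g_grad (h n)) x y) ->
  forall n,
    energy nu (h (S n)) - energy nu (h n)
    + (A + 1 / 2 + sqrt (2 * nu / tau)) * grad_L2sq (sub2 (h (S n)) (h n))
    <= grad_L2sq (sub2 (h (S n)) (h n)) * (3 / 2)
       * Rmax ((grad_Linf (h n))^2) ((grad_Linf (h (S n)))^2).
Proof.
  intros Hnu Htau _ _ _ _ _ _ HX Hscheme n.
  apply (energy_step nu tau A _ N); auto; intros x y.
  - eapply Rle_trans; [apply gradsq_le_grad_Linf, (in_XN_trig_poly N), HX|apply Rmax_l].
  - eapply Rle_trans; [apply gradsq_le_grad_Linf, (in_XN_trig_poly N), HX|apply Rmax_r].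
Qed.
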